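(* For all $n\ge 0$, the quadruples of statistics $(\operatorname{asc},\operatorname{des},\operatorname{MNA},\operatorname{MND})$ and $(\operatorname{des},\operatorname{asc},\operatorname{MND},\operatorname{MNA})$ are equidistributed on $S_n(231,312)$, i.e. $$\sum_{\pi\in S_n(231,312)} t_1^{\operatorname{asc}(\pi)}t_2^{\operatorname{des}(\pi)}t_3^{\operatorname{MNA}(\pi)}t_4^{\operatorname{MND}(\pi)}=\sum_{\pi\in S_n(231,312)} t_1^{\operatorname{des}(\pi)}t_2^{\operatorname{asc}(\pi)}t_3^{\operatorname{MND}(\pi)}t_4^{\operatorname{MNA}(\pi)}.$$
   Context: For $n\ge 0$, $S_n$ denotes the set of permutations $\pi=\pi_1\cdots\pi_n$ of $[n]=\{1,\dots,n\}$. $\pi$ avoids a pattern $\tau\in S_k$ if no subsequence $\pi_{i_1}\cdots\pi_{i_k}$ ($i_1<\dots<i_k$) satisfies $\pi_{i_a}<\pi_{i_b}\iff\tau_a<\tau_b$; $S_n(\tau,\rho)$ is the set of permutations in $S_n$ avoiding both $\tau$ and $\rho$. $\operatorname{asc}(\pi)$ (resp. $\operatorname{des}(\pi)$) is the number of $i\in[n-1]$ with $\pi_i<\pi_{i+1}$ (resp. $\pi_i>\pi_{i+1}$). $\operatorname{MNA}(\pi)$ is the maximum size of a set $I\subseteq[n-1]$ such that $\pi_i<\pi_{i+1}$ for all $i\in I$ and $|i-j|\ge 2$ for distinct $i,j\in I$; $\operatorname{MND}(\pi)$ is defined analogously with $\pi_i>\pi_{i+1}$. *)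

From mathcomp Require Import all_boot all_order all_algebra all_fingroup.
Set Implicit Arguments. Unset Strict Implicit. Unset Printing Implicit Defensive.

(* A permutation pi of [n] is represented by pi : 'S_n (a permutation of
   'I_n = {0,...,n-1}); its one-line notation is pi_1 ... pi_n with values
   shifted down by one (irrelevant for all statistics below). *)
Definition oneline n (pi : 'S_n) : seq nat := [seq val (pi i) | i <- enum 'I_n].

Definition contains_pattern (s tau : seq nat) : bool :=
  [exists m : (size s).-tuple bool,
    (size (mask m s) == size tau) &&
    [forall a : 'I_(size tau), forall b : 'I_(size tau),
      (nth 0 (mask m s) a < nth 0 (mask m s) b) == (nth 0 tau a < nth 0 tau b)]].

Definition avoids n (pi : 'S_n) (tau : seq nat) : bool :=
  ~~ contains_pattern (oneline pi) tau.

(* 0-based positions: i is an ascent if i+1 < n and pi_i < pi_{i+1}. *)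
Definition is_asc n (pi : 'S_n) (i : 'I_n) : bool :=
  (i.+1 < n) && (nth 0 (oneline pi) i < nth 0 (oneline pi) i.+1).
Definition is_des n (pi : 'S_n) (i : 'I_n) : bool :=
  (i.+1 < n) && (nth 0 (oneline pi) i > nth 0 (oneline pi) i.+1).

Definition asc n (pi : 'S_n) : nat := #|[set i | is_asc pi i]|.
Definition des n (pi : 'S_n) : nat := #|[set i | is_des pi i]|.

Definition nonadj n (P : 'I_n -> bool) (I : {set 'I_n}) : bool :=
  [forall i in I, P i] &&
  [forall i in I, forall j in I, (i != j) ==> ((i.+1 < j) || (j.+1 < i))].

Definition MNA n (pi : 'S_n) : nat :=
  \max_(I : {set 'I_n} | nonadj (is_asc pi) I) #|I|.
Definition MND n (pi : 'S_n) : nat :=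
  \max_(I : {set 'I_n} | nonadj (is_des pi) I) #|I|.

From mathcomp Require Import all_boot all_order all_algebra all_fingroup.
From mathcomp Require Import zify.
Set Implicit Arguments. Unset Strict Implicit. Unset Printing Implicit Defensive.

(* A permutation avoids 231 and 312 iff it is layered, i.e. a concatenation of
   decreasing runs of consecutive values such as 3 2 1 4 6 5.  A layered
   permutation is determined by its descent set, any descent set occurs, and the
   ascent set is the complement of the descent set.  Hence sending pi to the
   layered permutation whose descent set is the ascent set of pi is an involution
   of S_n(231, 312) exchanging asc and des, and also MNA and MND, which only
   depend on the ascent and descent sets. *)

Section Runs.
Variables (d : nat -> bool) (n : nat).

(* [run_start i] and [run_end i] delimit the maximal interval [S, E] around i
   such that d holds on [S, E). *)
Fixpoint run_start i := if i is i'.+1 then (if d i' then run_start i' else i) else i.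

Definition run_end i := i + find (predC d) (iota i (n - i)).

Lemma run_start_le i : run_start i <= i.
Proof. by elim: i => //= i IH; case: (d i) => //; apply: leqW. Qed.

Lemma run_start_run i j : run_start i <= j < i -> d j.
Proof.
elim: i => [|i IH] /=; first lia.
case d_i: (d i) => hj; last lia.
by case: (ltngtP j i) => [lt_ji||->] //; [apply: IH | ]; lia.
Qed.

Lemma run_start_stop i : run_start i = 0 \/ ~~ d (run_start i).-1.
Proof. by elim: i => [|i IH] /=; [left | case d_i: (d i) => //; right; rewrite d_i]. Qed.

Lemma run_startE i x : x <= i -> (forall k, x <= k < i -> d k) ->
  x = 0 \/ ~~ d x.-1 -> run_start i = x.
Proof.
move=> le_xi run_x stop_x; have := run_start_le i.
case: (ltngtP (run_start i) x) => // lt_sx le_si.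
- by case: stop_x => [|/negP[]]; [lia | apply: (run_start_run (i:=i)); lia].
- by case: (run_start_stop i) => [|/negP[]]; [lia | apply: run_x; lia].
Qed.

Lemma run_end_ge i : i <= run_end i.
Proof. exact: leq_addr. Qed.

Lemma run_end_run i j : i <= j < run_end i -> d j.
Proof.
rewrite /run_end => hj; have := find_size (predC d) (iota i (n - i)).
rewrite size_iota => le_find.
have := @before_find _ 0 (predC d) (iota i (n - i)) (j - i) (ltac:(lia)).
rewrite nth_iota; last lia.
by rewrite subnKC; [move/negbFE | lia].
Qed.

Hypothesis d_lt : forall j, d j -> j.+1 < n.

Lemma run_end_has i : i < n -> has (predC d) (iota i (n - i)).
Proof.
move=> lt_in; apply/hasP; exists n.-1; first by rewrite mem_iota; lia.
by apply/negP => /d_lt; lia.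
Qed.

Lemma run_end_lt i : i < n -> run_end i < n.
Proof. by move/run_end_has; rewrite has_find size_iota /run_end; lia. Qed.

Lemma run_end_stop i : i < n -> ~~ d (run_end i).
Proof.
move=> lt_in; have := nth_find 0 (run_end_has lt_in).
have := run_end_lt lt_in; rewrite /run_end => lt_end.
by rewrite nth_iota //; lia.
Qed.

Lemma run_endE i x : i < n -> i <= x -> (forall k, i <= k < x -> d k) -> ~~ d x ->
  run_end i = x.
Proof.
move=> lt_in le_ix run_x stop_x; have := run_end_ge i.
case: (ltngtP (run_end i) x) => // lt_ex le_ie.
- by case/negP: (run_end_stop lt_in); apply: run_x; lia.
- by case/negP: stop_x; apply: (run_end_run (i:=i)); lia.
Qed.

Lemma in_run i k : run_start i <= k < run_end i -> d k.
Proof.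
case: (ltnP k i) => [lt_ki|le_ik] hk; first by apply: (run_start_run (i:=i)); lia.
by apply: (run_end_run (i:=i)); lia.
Qed.

Lemma run_same i j : i < n -> run_start i <= j <= run_end i ->
  run_start j = run_start i /\ run_end j = run_end i.
Proof.
move=> lt_in hj; have := run_start_le i; have := run_end_ge i.
have := run_end_lt lt_in => lt_end le_ie le_si.
split.
- apply: run_startE; [lia | move=> k hk; apply: (in_run (i:=i)); lia | exact: run_start_stop].
- apply: run_endE; [lia | lia | move=> k hk; apply: (in_run (i:=i)); lia | exact: run_end_stop].
Qed.

Lemma run_end_lt_start i j : i < n -> run_end i < j -> run_end i < run_start j.
Proof.
move=> lt_in lt_ej; rewrite ltnNge; apply/negP => le_se.
by case/negP: (run_end_stop lt_in); apply: (run_start_run (i:=j)); lia.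
Qed.

(* Reverses every interval [S, E]: the layered permutation with descent set d. *)
Definition layered i := run_start i + run_end i - i.

Lemma layered_in_run i : run_start i <= layered i <= run_end i.
Proof. by have := run_start_le i; have := run_end_ge i; rewrite /layered; lia. Qed.

Lemma layered_lt i : i < n -> layered i < n.
Proof. by move=> lt_in; have := layered_in_run i; have := run_end_lt lt_in; lia. Qed.

Lemma layered_gt_in_run i j : i < j < n -> j <= run_end i -> layered j < layered i.
Proof.
move=> lt_ij le_je; have le_si := run_start_le i.
have [eq_s eq_e] := @run_same i j (ltac:(lia)) (ltac:(lia)).
by rewrite /layered eq_s eq_e; lia.
Qed.

Lemma layered_lt_later_run i j : i < j < n -> run_end i < j -> layered i < layered j.
Proof.
move=> lt_ij lt_ej; have := @run_end_lt_start i j (ltac:(lia)) lt_ej.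
by have := layered_in_run i; have := layered_in_run j; lia.
Qed.

Lemma layered_inj i j : i < n -> j < n -> layered i = layered j -> i = j.
Proof.
have neq i' j' : i' < j' < n -> layered i' <> layered j'.
  move=> lt_ij; case: (leqP j' (run_end i')) => [le_je|lt_ej].
  - by have := layered_gt_in_run lt_ij le_je; lia.
  - by have := layered_lt_later_run lt_ij lt_ej; lia.
move=> lt_in lt_jn eq_ij.
by case: (ltngtP i j) => // [lt_ij|lt_ji]; exfalso; [apply: (neq i j) | apply: (neq j i)]; lia.
Qed.

Lemma layered_descent i : i.+1 < n -> (layered i.+1 < layered i) = d i.
Proof.
move=> lt_i1n; case d_i: (d i).
  have ne_ei : run_end i != i.
    by apply/eqP => end_i; have := run_end_stop (ltnW lt_i1n); rewrite end_i d_i.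
  by apply: layered_gt_in_run; have := run_end_ge i; lia.
have end_i : run_end i = i by apply: run_endE; rewrite ?d_i //; lia.
by apply/negbTE; rewrite -leqNgt ltnW // layered_lt_later_run; lia.
Qed.

Lemma layered_no231 a b c : a < b -> b < c -> c < n ->
  ~ (layered c < layered a < layered b).
Proof.
move=> lt_ab lt_bc lt_cn.
case: (leqP b (run_end a)) => [/layered_gt_in_run|lt_eb]; first lia.
by have := @layered_lt_later_run a c (ltac:(lia)) (ltac:(lia)); lia.
Qed.

Lemma layered_no312 a b c : a < b -> b < c -> c < n ->
  ~ (layered b < layered c < layered a).
Proof.
move=> lt_ab lt_bc lt_cn.
case: (leqP c (run_end a)) => [le_ce|lt_ec]; last first.
  by have := @layered_lt_later_run a c (ltac:(lia)) lt_ec; lia.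
have le_sa := run_start_le a.
have [_ end_b] := @run_same a b (ltac:(lia)) (ltac:(lia)).
by have := @layered_gt_in_run b c (ltac:(lia)) (ltac:(lia)); lia.
Qed.

End Runs.

Lemma eq_layered d1 d2 n : d1 =1 d2 -> layered d1 n =1 layered d2 n.
Proof.
move=> eq_d i; have eq_start : run_start d1 i = run_start d2 i.
  by elim: i => //= i ->; rewrite eq_d.
by rewrite /layered /run_end eq_start (eq_find (a2 := predC d2)) // => j /=; rewrite eq_d.
Qed.

Lemma leq_of_inj_bounded m m' (f : nat -> nat) :
  (forall x, x < m -> f x < m') ->
  (forall x y, x < m -> y < m -> f x = f y -> x = y) -> m <= m'.
Proof.
move=> f_lt f_inj.
have uniq_f : uniq (map f (iota 0 m)).
  rewrite map_inj_in_uniq ?iota_uniq // => x y; rewrite !mem_iota => hx hy.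
  by apply: f_inj; lia.
have := uniq_leq_size uniq_f (s2 := iota 0 m'); rewrite size_map !size_iota.
by apply=> v /mapP [x]; rewrite !mem_iota => hx ->; have := f_lt x; lia.
Qed.

Record avoids_231_312_fun n (p : nat -> nat) : Prop := {
  avf_inj : forall a b, a < n -> b < n -> p a = p b -> a = b;
  avf_onto : forall v, v < n -> exists2 a, a < n & p a = v;
  avf_lt : forall a, a < n -> p a < n;
  avf_no231 : forall a b c, a < b -> b < c -> c < n -> ~ (p c < p a < p b);
  avf_no312 : forall a b c, a < b -> b < c -> c < n -> ~ (p b < p c < p a) }.

Definition descents n (p : nat -> nat) j := (j.+1 < n) && (p j.+1 < p j).

Section AvoidingFunctions.
Variables (n : nat) (p : nat -> nat).
Hypothesis hp : avoids_231_312_fun n p.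

Lemma avf_lt_of_nlt a b : a < n -> b < n -> a != b -> ~ p b < p a -> p a < p b.
Proof. by move=> lt_an lt_bn ne_ab; have := avf_inj hp lt_an lt_bn; lia. Qed.

Lemma ascent_separates k : k.+1 < n -> p k < p k.+1 ->
  forall a b, a <= k -> k < b -> b < n -> p a < p b.
Proof.
move=> lt_k1n asc_k.
have below a : a <= k -> p a < p k.+1.
  move=> le_ak; case: (eqVneq a k) => [-> //|ne_ak].
  apply: avf_lt_of_nlt; [lia | lia | lia | move=> lt_pa].
  by apply: (avf_no312 hp (a:=a) (b:=k) (c:=k.+1)); lia.
have above b : k < b -> b < n -> p k < p b.
  move=> lt_kb lt_bn; case: (eqVneq b k.+1) => [-> //|ne_bk].
  apply: avf_lt_of_nlt; [lia | lia | lia | move=> lt_pb].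
  by apply: (avf_no231 hp (a:=k) (b:=k.+1) (c:=b)); lia.
move=> a b le_ak lt_kb lt_bn; have lt_a := below a le_ak.
case: (eqVneq b k.+1) => [-> // |ne_bk].
apply: avf_lt_of_nlt; [lia | lia | lia | move=> lt_pb].
by apply: (avf_no231 hp (a:=a) (b:=k.+1) (c:=b)); lia.
Qed.

Lemma ascent_prefix k a : k.+1 < n -> p k < p k.+1 -> a <= k -> p a <= k.
Proof.
move=> lt_k1n asc_k le_ak; have sep := ascent_separates lt_k1n asc_k le_ak.
have lt_pan : p a < n by apply: (avf_lt hp); lia.
(* p sends the positions after k injectively to values above p a. *)
suff : n - k.+1 <= n - (p a).+1 by lia.
apply: (@leq_of_inj_bounded _ _ (fun x => p (k.+1 + x) - (p a).+1)).
  move=> x lt_x; have lt_px : p (k.+1 + x) < n by apply: (avf_lt hp); lia.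
  by have := sep (k.+1 + x) (ltac:(lia)) (ltac:(lia)); lia.
move=> x y lt_x lt_y eq_xy.
have := sep (k.+1 + x) (ltac:(lia)) (ltac:(lia)).
have := sep (k.+1 + y) (ltac:(lia)) (ltac:(lia)).
by have := @avf_inj _ _ hp (k.+1 + x) (k.+1 + y); lia.
Qed.

Lemma ascent_suffix k b : k.+1 < n -> p k < p k.+1 -> k < b -> b < n -> k < p b.
Proof.
move=> lt_k1n asc_k lt_kb lt_bn; have sep := ascent_separates lt_k1n asc_k.
apply: (@leq_of_inj_bounded _ _ p) => [x lt_x|x y lt_x lt_y]; first exact: sep.
by move=> eq_xy; apply: (avf_inj hp _ _ eq_xy); lia.
Qed.

Lemma descent_by_one j : j.+1 < n -> p j.+1 < p j -> p j = (p j.+1).+1.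
Proof.
(* The value (p j.+1).+1 can occur neither before j (231) nor after j.+1 (312). *)
move=> lt_j1n des_j; apply/eqP; rewrite eqn_leq des_j andbT leqNgt; apply/negP => gap.
have lt_pjn : p j < n by apply: (avf_lt hp); lia.
have [q lt_qn pq] : exists2 q, q < n & p q = (p j.+1).+1 by apply: (avf_onto hp); lia.
case: (ltngtP q j) => [lt_qj|lt_jq|eq_qj]; last by move: pq; rewrite eq_qj; lia.
  by apply: (avf_no231 hp (a:=q) (b:=j) (c:=j.+1)); lia.
case: (ltngtP q j.+1) => [|lt_j1q|eq_qj1]; [lia | | by move: pq; rewrite eq_qj1; lia].
by apply: (avf_no312 hp (a:=j) (b:=j.+1) (c:=q)); lia.
Qed.

Lemma descent_run_addn j k : j <= k -> (forall x, j <= x < k -> descents n p x) ->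
  p k + k = p j + j.
Proof.
elim: k => [|k IH] le_jk run_jk; first by have -> : j = 0 by lia.
case: (eqVneq j k.+1) => [-> //|ne_jk].
have /andP[lt_k1n des_k] := run_jk k (ltac:(lia)).
have := IH (ltac:(lia)) (fun x hx => run_jk x (ltac:(lia))).
by have := descent_by_one lt_k1n des_k; lia.
Qed.

Lemma ascent_of_not_descent k : k.+1 < n -> ~~ descents n p k -> p k < p k.+1.
Proof.
rewrite /descents => lt_k1n; rewrite lt_k1n /= -leqNgt leq_eqVlt => /orP[/eqP eq_k|//].
by have := @avf_inj _ _ hp k k.+1; lia.
Qed.

Lemma avoids_layered i : i < n -> p i = layered (descents n p) n i.
Proof.
move=> lt_in; set d := descents n p.
have d_lt j : d j -> j.+1 < n by case/andP.
set S := run_start d i; set E := run_end d n i.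
have le_Si : S <= i := run_start_le d i.
have le_iE : i <= E := run_end_ge d n i.
have lt_En : E < n := run_end_lt d_lt lt_in.
have in_run_i x : S <= x < E -> d x := @in_run d n i x.
have sum_i : p i + i = p S + S.
  by apply: descent_run_addn => [|x hx]; [lia | apply: in_run_i; lia].
have sum_E : p E + E = p S + S.
  by apply: descent_run_addn => [|x hx]; [lia | apply: in_run_i; lia].
have le_pSE : p S <= E.
  have lt_pSn : p S < n by apply: (avf_lt hp); lia.
  case: (ltnP E.+1 n) => [lt_E1n|]; last lia.
  by apply: (ascent_prefix lt_E1n (ascent_of_not_descent lt_E1n (run_end_stop d_lt lt_in))); lia.
have le_SpE : S <= p E.
  case: (posnP S) => [-> // | S_pos].
  move: (run_start_stop d i); rewrite -/S => -[|stop_S]; first lia.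
  have lt_S1n : S.-1.+1 < n by lia.
  have asc_S1 := ascent_of_not_descent lt_S1n stop_S.
  by have := ascent_suffix lt_S1n asc_S1 (ltac:(lia) : S.-1 < E) lt_En; lia.
(* p i + i = p S + S = p E + E, and the two bounds force p S = E. *)
by rewrite /layered -/S -/E; lia.
Qed.

End AvoidingFunctions.

Definition order_iso (u t : seq nat) : bool :=
  [forall a : 'I_(size t), forall b : 'I_(size t),
    (nth 0 u a < nth 0 u b) == (nth 0 t a < nth 0 t b)].

Lemma mask_nthE (s : seq nat) (m : bitseq) :
  mask m s = map (nth 0 s) (mask m (iota 0 (size s))).
Proof. by rewrite map_mask [map _ _](mkseq_nth 0 s). Qed.

Lemma mask_size3 (s : seq nat) (m : bitseq) : size (mask m s) = 3 ->
  exists a b c, [/\ a < b, b < c, c < size s &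
    mask m s = [:: nth 0 s a; nth 0 s b; nth 0 s c]].
Proof.
have sorted_idx : sorted ltn (mask m (iota 0 (size s))).
  exact: (sorted_mask ltn_trans _ (iota_ltn_sorted 0 _)).
have idx_lt v : v \in mask m (iota 0 (size s)) -> v < size s.
  by move/mem_mask; rewrite mem_iota.
rewrite mask_nthE size_map; move: sorted_idx idx_lt.
case: (mask m (iota 0 (size s))) => [|a [|b [|c [|? ?]]]] //= /and3P[lt_ab lt_bc _] idx_lt _.
by exists a, b, c; split=> //; apply: idx_lt; rewrite !inE eqxx !orbT.
Qed.

Lemma mask_of_indices (s : seq nat) a b c : a < b -> b < c -> c < size s ->
  exists m : (size s).-tuple bool, mask m s = [:: nth 0 s a; nth 0 s b; nth 0 s c].
Proof.
move=> lt_ab lt_bc lt_cs; pose m := [seq i \in [:: a; b; c] | i <- iota 0 (size s)].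
have size_m : size m == size s by rewrite size_map size_iota.
exists (Tuple size_m); rewrite /= mask_nthE /m -filter_mask.
suff -> : [seq i <- iota 0 (size s) | i \in [:: a; b; c]] = [:: a; b; c] by [].
apply: (irr_sorted_eq ltn_trans ltnn).
- exact: (sorted_filter ltn_trans _ (iota_ltn_sorted 0 _)).
- by rewrite /= lt_ab lt_bc.
move=> v; rewrite mem_filter mem_iota; apply/andP/idP => [[] // | abc_v].
by split=> //; move: abc_v; rewrite !inE => /or3P[] /eqP ->; lia.
Qed.

Lemma contains3P (s tau : seq nat) : size tau = 3 ->
  reflect (exists a b c, [/\ a < b, b < c, c < size s &
             order_iso [:: nth 0 s a; nth 0 s b; nth 0 s c] tau])
          (contains_pattern s tau).
Proof.
move=> size_tau; apply: (iffP existsP) => [[m /andP[/eqP size_m iso_m]]|].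
  rewrite size_tau in size_m; have [a [b [c [lt_ab lt_bc lt_cs mE]]]] := mask_size3 size_m.
  by exists a, b, c; rewrite -mE.
case=> a [b [c [lt_ab lt_bc lt_cs iso_abc]]].
have [m mE] := mask_of_indices lt_ab lt_bc lt_cs.
by exists m; rewrite mE; apply/andP; split; [rewrite size_tau | exact: iso_abc].
Qed.

Lemma order_iso231 u0 u1 u2 : order_iso [:: u0; u1; u2] [:: 2; 3; 1] = (u2 < u0 < u1).
Proof.
apply/forallP/andP => [iso | [lt_20 lt_01] i].
  have := forallP (iso (@Ordinal 3 2 isT)) (@Ordinal 3 0 isT).
  have := forallP (iso (@Ordinal 3 0 isT)) (@Ordinal 3 1 isT).
  by move=> /eqP /= -> /eqP /= ->.
apply/forallP => j; case: i j => [[|[|[|i]]] lt_i] [[|[|[|j]]] lt_j] //=; apply/eqP; lia.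
Qed.

Lemma order_iso312 u0 u1 u2 : order_iso [:: u0; u1; u2] [:: 3; 1; 2] = (u1 < u2 < u0).
Proof.
apply/forallP/andP => [iso | [lt_12 lt_20] i].
  have := forallP (iso (@Ordinal 3 1 isT)) (@Ordinal 3 2 isT).
  have := forallP (iso (@Ordinal 3 2 isT)) (@Ordinal 3 0 isT).
  by move=> /eqP /= -> /eqP /= ->.
apply/forallP => j; case: i j => [[|[|[|i]]] lt_i] [[|[|[|j]]] lt_j] //=; apply/eqP; lia.
Qed.

Definition pval n (pi : 'S_n) i := nth 0 (oneline pi) i.

Lemma size_oneline n (pi : 'S_n) : size (oneline pi) = n.
Proof. by rewrite size_map size_enum_ord. Qed.

Lemma pvalE n (pi : 'S_n) (i : 'I_n) : pval pi i = pi i.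
Proof. by rewrite /pval /oneline (nth_map i) ?size_enum_ord // nth_ord_enum. Qed.

Section PermValues.
Variables (n : nat) (pi : 'S_n).

Lemma pval_inj a b : a < n -> b < n -> pval pi a = pval pi b -> a = b.
Proof.
move=> lt_an lt_bn; rewrite -[a]/(Ordinal lt_an : nat) -[b]/(Ordinal lt_bn : nat) !pvalE.
by move=> /val_inj /perm_inj [].
Qed.

Lemma pval_onto v : v < n -> exists2 a, a < n & pval pi a = v.
Proof. by move=> lt_vn; exists ((pi^-1)%g (Ordinal lt_vn)) => //; rewrite pvalE permKV. Qed.

Lemma pval_lt a : a < n -> pval pi a < n.
Proof. by move=> lt_an; rewrite -[a]/(Ordinal lt_an : nat) pvalE. Qed.

End PermValues.

Definition avoids_231_312 n (pi : 'S_n) := avoids pi [:: 2; 3; 1] && avoids pi [:: 3; 1; 2].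

Lemma avoids_231_312P n (pi : 'S_n) :
  reflect (avoids_231_312_fun n (pval pi)) (avoids_231_312 pi).
Proof.
apply: (iffP andP) => [[no231 no312] | pf].
  split=> [||| a b c lt_ab lt_bc lt_cn pat | a b c lt_ab lt_bc lt_cn pat].
  - exact: pval_inj.
  - exact: pval_onto.
  - exact: pval_lt.
  - case/negP: no231; apply/contains3P => //.
    by exists a, b, c; rewrite size_oneline order_iso231.
  - case/negP: no312; apply/contains3P => //.
    by exists a, b, c; rewrite size_oneline order_iso312.
split; apply/negP => /contains3P [] // a [b [c []]]; rewrite size_oneline.
- by rewrite order_iso231; apply: (avf_no231 pf).
- by rewrite order_iso312; apply: (avf_no312 pf).
Qed.

Definition restrict n (d : nat -> bool) j := (j.+1 < n) && d j.

Lemma restrict_lt n d j : restrict n d j -> j.+1 < n.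
Proof. by case/andP. Qed.

Definition layered_ord n d (i : 'I_n) : 'I_n :=
  Ordinal (layered_lt (@restrict_lt n d) (ltn_ord i)).

Lemma layered_ord_inj n d : injective (@layered_ord n d).
Proof.
move=> i j /(congr1 val) /= eq_ij; apply: val_inj.
exact: (layered_inj (@restrict_lt n d) (ltn_ord i) (ltn_ord j) eq_ij).
Qed.

Definition layered_perm n d : 'S_n := perm (@layered_ord_inj n d).

Lemma pval_layered_perm n d i : i < n ->
  pval (layered_perm n d) i = layered (restrict n d) n i.
Proof. by move=> lt_in; rewrite -[i]/(Ordinal lt_in : nat) pvalE permE. Qed.

Lemma layered_perm_avoids n d : avoids_231_312 (layered_perm n d).
Proof.
apply/avoids_231_312P; split=> [||| a b c lt_ab lt_bc lt_cn | a b c lt_ab lt_bc lt_cn].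
- exact: pval_inj.
- exact: pval_onto.
- exact: pval_lt.
- rewrite !pval_layered_perm; [|lia..].
  exact: (layered_no231 (@restrict_lt n d) lt_ab lt_bc lt_cn).
- rewrite !pval_layered_perm; [|lia..].
  exact: (layered_no312 (@restrict_lt n d) lt_ab lt_bc lt_cn).
Qed.

Lemma is_des_layered_perm n d (i : 'I_n) : is_des (layered_perm n d) i = restrict n d i.
Proof.
rewrite /is_des -/(pval _ i) -/(pval _ i.+1); case: (ltnP i.+1 n) => [lt_i1n|] /=.
  by rewrite !pval_layered_perm // ?layered_descent ?lt_i1n //; exact: restrict_lt.
by rewrite /restrict ltnNge => ->.
Qed.

Lemma is_asc_des n (pi : 'S_n) (i : 'I_n) : is_asc pi i = (i.+1 < n) && ~~ is_des pi i.
Proof.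
rewrite /is_asc /is_des -!/(pval _ _); case: (ltnP i.+1 n) => //= lt_i1n.
rewrite -leqNgt ltn_neqAle; case: eqVneq => //= eq_i.
by have := pval_inj (ltn_ord i) lt_i1n eq_i; lia.
Qed.

Lemma avoids_231_312_inj n (pi1 pi2 : 'S_n) :
  avoids_231_312 pi1 -> avoids_231_312 pi2 -> is_des pi1 =1 is_des pi2 -> pi1 = pi2.
Proof.
move=> /avoids_231_312P av1 /avoids_231_312P av2 eq_des.
have eq_d : descents n (pval pi1) =1 descents n (pval pi2).
  rewrite /descents => j; case: (ltnP j.+1 n) => //= lt_j1n.
  by have := eq_des (Ordinal (ltnW lt_j1n)); rewrite /is_des /= lt_j1n.
apply/permP => i; apply: val_inj; rewrite /= -!pvalE.
by rewrite (avoids_layered av1) // (avoids_layered av2) // (eq_layered _ eq_d).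
Qed.

Lemma eq_nonadj n (P Q : 'I_n -> bool) I : P =1 Q -> nonadj P I = nonadj Q I.
Proof. by move=> eqPQ; rewrite /nonadj (eq_forallb_in (fun i _ => eqPQ i)). Qed.

(* The identity outside the class, so that it is an involution of 'S_n. *)
Definition flip_descents n (pi : 'S_n) : 'S_n :=
  if avoids_231_312 pi then layered_perm n (fun i => pval pi i < pval pi i.+1) else pi.

Section FlipDescents.
Variables (n : nat) (pi : 'S_n).
Hypothesis av : avoids_231_312 pi.

Lemma is_des_flip (i : 'I_n) : is_des (flip_descents pi) i = is_asc pi i.
Proof. by rewrite /flip_descents av is_des_layered_perm. Qed.

Lemma is_asc_flip (i : 'I_n) : is_asc (flip_descents pi) i = is_des pi i.
Proof.
rewrite is_asc_des is_des_flip is_asc_des; case: ltnP => /= [_|ge_i1n].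
  exact: negbK.
by rewrite /is_des ltnNge ge_i1n.
Qed.

Lemma asc_flip : asc (flip_descents pi) = des pi.
Proof. by apply: eq_card => i; rewrite !inE is_asc_flip. Qed.

Lemma des_flip : des (flip_descents pi) = asc pi.
Proof. by apply: eq_card => i; rewrite !inE is_des_flip. Qed.

Lemma MNA_flip : MNA (flip_descents pi) = MND pi.
Proof. by apply: eq_bigl => I; apply: eq_nonadj => i; rewrite is_asc_flip. Qed.

Lemma MND_flip : MND (flip_descents pi) = MNA pi.
Proof. by apply: eq_bigl => I; apply: eq_nonadj => i; rewrite is_des_flip. Qed.

End FlipDescents.

Lemma flip_descents_avoids n (pi : 'S_n) :
  avoids_231_312 (flip_descents pi) = avoids_231_312 pi.
Proof.
by rewrite /flip_descents; case: ifP => [_|//]; rewrite layered_perm_avoids.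
Qed.

Lemma flip_descentsK n : involutive (@flip_descents n).
Proof.
move=> pi; case av: (avoids_231_312 pi); last by rewrite /flip_descents av av.
have av' : avoids_231_312 (flip_descents pi) by rewrite flip_descents_avoids.
apply: avoids_231_312_inj; rewrite ?flip_descents_avoids // => i.
by rewrite is_des_flip // is_asc_flip.
Qed.

Local Open Scope ring_scope.

Theorem theorem12 (R : comNzRingType) (n : nat) (t1 t2 t3 t4 : R) :
  \sum_(pi : 'S_n | (avoids pi [:: 2; 3; 1]%N) && (avoids pi [:: 3; 1; 2]%N))
     t1 ^+ asc pi * t2 ^+ des pi * t3 ^+ MNA pi * t4 ^+ MND pi
  = \sum_(pi : 'S_n | (avoids pi [:: 2; 3; 1]%N) && (avoids pi [:: 3; 1; 2]%N))
     t1 ^+ des pi * t2 ^+ asc pi * t3 ^+ MND pi * t4 ^+ MNA pi.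
Proof.
rewrite (reindex_inj (inv_inj (@flip_descentsK n))) /=.
apply: eq_big => [pi | pi av_flip]; first exact: flip_descents_avoids.
have av : avoids_231_312 pi by rewrite -flip_descents_avoids.
by rewrite asc_flip // des_flip // MNA_flip // MND_flip.
Qed.
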